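(* Let $n\ge 3$ be an odd integer. Then for all $m\in\{3,\ldots,n-1\}$ with $\gcd(m,n)=1$ and $m\neq (n+1)/2$, we have $S(2,n)>S(m,n)$.
   Context: For integers $m,n$ with $n\neq 0$ and $\gcd(m,n)=1$, the Dedekind sum is $s(m,n)=\sum_{j=1}^{|n|}((j/n))((mj/n))$, where $((t))=t-\lfloor t\rfloor-1/2$ if $t\in\mathbb{R}\setminus\mathbb{Z}$ and $((t))=0$ if $t\in\mathbb{Z}$. Define $S(m,n)=12\,s(m,n)$. *)

From mathcomp Require Import all_boot all_order all_algebra.
Set Implicit Arguments. Unset Strict Implicit. Unset Printing Implicit Defensive.
Import Order.TTheory GRing.Theory Num.Theory.
Local Open Scope ring_scope.

Definition sawtooth (t : rat) : rat :=
  if t \is a Num.int then 0 else t - (Num.floor t)%:~R - 1 / 2%:R.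

Definition dedekind_sum (m n : int) : rat :=
  \sum_(1 <= j < `|n|%N.+1)
     sawtooth ((j%:Z)%:~R / n%:~R) * sawtooth ((m * j%:Z)%:~R / n%:~R).

Definition S (m n : int) : rat := 12%:R * dedekind_sum m n.

From mathcomp Require Import all_boot all_order all_algebra.
Import Order.TTheory GRing.Theory Num.Theory.
Local Open Scope ring_scope.
From mathcomp Require Import zify ring.

(* Write s(j) = m j mod n.  For 0 < j < n one has ((j/n)) = (2j - n)/2n, hence
   S(m,n) = 3/n^2 (sum_(j<n) (2j - n)(2 s(j) - n) - n^2); as s permutes
   {0, ..., n-1}, polarization turns this into
   S(m,n) = 3/n^2 (sum_(j<n) (2j - n)^2 - n^2 - 2 D(m,n)) with
   D(m,n) = sum_(j<n) (j - s(j))^2, so it suffices to show D(2,n) < D(m,n).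
   Since j - s(j) = -(m-1) j (mod n) and |j - s(j)| < n, |j - s(j)| is either
   the distance c((m-1)j) from (m-1)j to the nearest multiple of n or n minus
   it.  With d = gcd(m-1,n) the residues (m-1)j mod n run d times over the
   multiples of d, so 12 sum_j c((m-1)j)^2 = n^3 - d^2 n, whereas
   12 D(2,n) = n^3 - n.  If d = 1, some j has |j - s(j)| > n/2 (j = 1 when
   m > (n+1)/2, j = n %/ m otherwise), which makes the inequality strict.  If
   d > 1, write n = d(2H+1); the indices j < n/3 with (m-1)j = d(H+1) (mod n)
   are forced onto the longer candidate, each exceeding its minimum by d n,
   and the floor(d/3) of them outweigh the deficit (d^2 - 1) n / 12. *)

Section Deviation.
Set Implicit Arguments.
Unset Strict Implicit.
Local Open Scope nat_scope.

Lemma big_ord_mul {R : Type} {idx : R} {op : Monoid.law idx} (d N : nat) (F : nat -> R) :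
  \big[op/idx]_(j < d * N) F j = \big[op/idx]_(t < d) \big[op/idx]_(r < N) F (t * N + r).
Proof.
rewrite -(big_mkord xpredT F) big_nat_mul big_mkord; apply: eq_bigr => t _.
rewrite mulSn addnC -{1}[t * N]add0n big_addn addKn big_mkord.
by apply: eq_bigr => r _; rewrite addnC.
Qed.

Lemma odd_double_halfS (n : nat) : odd n -> n = (2 * n./2).+1.
Proof. by move=> oddn; rewrite -{1}(odd_double_half n) oddn add1n -muln2 mulnC. Qed.

Lemma gcdn_cofactors (a n : nat) : 0 < n ->
  exists N b, [/\ n = gcdn a n * N, a = gcdn a n * b & coprime b N].
Proof.
move=> n_gt0; set d := gcdn a n.
have d_gt0 : 0 < d by rewrite gcdn_gt0 n_gt0 orbT.
have nE : n = d * (n %/ d) by rewrite mulnC divnK ?dvdn_gcdr.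
have aE : a = d * (a %/ d) by rewrite mulnC divnK ?dvdn_gcdl.
exists (n %/ d), (a %/ d); split=> //.
by rewrite /coprime -(eqn_pmul2l d_gt0) muln1 muln_gcdr -aE -nE.
Qed.

Lemma mulmod_inj (b n i j : nat) : coprime b n -> i < n -> j < n ->
  (b * i) %% n = (b * j) %% n -> i = j.
Proof.
move=> cop.
wlog le_ij : i j / i <= j.
  move=> W ltin ltjn e; case: (leqP i j) => [|/ltnW] h; first exact: W.
  exact/esym/W.
move=> _ ltjn /eqP e.
have : n %| b * (j - i).
  by rewrite mulnBr -eqn_mod_dvd ?leq_mul2l ?le_ij ?orbT // eq_sym.
rewrite Gauss_dvdr 1?coprime_sym // /dvdn modn_small; lia.
Qed.

Definition mulmod_ord (b n : nat) (j : 'I_n.+1) : 'I_n.+1 :=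
  Ordinal (ltn_pmod (b * j) (ltn0Sn n)).

Lemma mulmod_ord_inj (b n : nat) : coprime b n.+1 -> injective (@mulmod_ord b n).
Proof.
move=> cop i j /(congr1 val) /= e; apply: val_inj.
exact: mulmod_inj cop (ltn_ord i) (ltn_ord j) e.
Qed.

Lemma big_mulmod {R : Type} {idx : R} {op : Monoid.com_law idx} (b n : nat) (F : nat -> R) :
  coprime b n -> \big[op/idx]_(j < n) F ((b * j) %% n) = \big[op/idx]_(j < n) F j.
Proof.
case: n => [_|n cop]; first by rewrite !big_ord0.
by rewrite [RHS](reindex_inj (mulmod_ord_inj cop)).
Qed.

Lemma mulmod_onto (b n y : nat) : coprime b n -> y < n ->
  exists2 x, x < n & (b * x) %% n = y.
Proof.
case: n => // n cop ltyn.
have := codomP (injF_onto (mulmod_ord_inj cop) (Ordinal ltyn)).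
by case=> x /(congr1 val) /= ->; exists x.
Qed.

(* The distance from [x] to the nearest multiple of [n], when [x <= n]. *)
Definition cnorm (n x : nat) : nat := minn x (n - x).

Lemma cnorm_mul (d n x : nat) : cnorm (d * n) (d * x) = d * cnorm n x.
Proof. by rewrite /cnorm -mulnBr minnMr. Qed.

Lemma sum_sq_ord (k : nat) : 6 * \sum_(j < k.+1) j ^ 2 = k * k.+1 * (2 * k + 1).
Proof.
elim: k => [|k IH]; first by rewrite big_ord_recr big_ord0.
by rewrite big_ord_recr /= mulnDr IH; lia.
Qed.

Lemma sum_cnorm_sq (N : nat) : odd N -> 12 * \sum_(j < N) cnorm N j ^ 2 + N = N ^ 3.
Proof.
move=> /odd_double_halfS ->; set H := N./2.
rewrite -(big_mkord xpredT (fun j => cnorm _ j ^ 2)).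
rewrite (big_cat_nat _ (n := H.+1)) //=; last lia.
have low : \sum_(0 <= j < H.+1) cnorm (2 * H).+1 j ^ 2 = \sum_(j < H.+1) j ^ 2.
  rewrite big_mkord; apply: eq_bigr => j _; have := ltn_ord j.
  by rewrite /cnorm => ?; congr (_ ^ 2); lia.
have high : \sum_(H.+1 <= j < (2 * H).+1) cnorm (2 * H).+1 j ^ 2 = \sum_(j < H.+1) j ^ 2.
  rewrite -{1}[H.+1]add0n big_addn (_ : (2 * H).+1 - H.+1 = H); last lia.
  rewrite big_nat_rev big_mkord big_ord_recl /= add0n; apply: eq_bigr => j _.
  by have := ltn_ord j; rewrite /cnorm /bump /= => ?; congr (_ ^ 2); lia.
by rewrite low high; have := sum_sq_ord H; lia.
Qed.

Lemma sum_cnorm_mulmod (d N b : nat) : coprime b N ->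
  \sum_(j < d * N) cnorm (d * N) ((d * b * j) %% (d * N)) ^ 2
    = d ^ 3 * \sum_(r < N) cnorm N r ^ 2.
Proof.
move=> cop.
rewrite (big_ord_mul d N (fun j => cnorm (d * N) ((d * b * j) %% (d * N)) ^ 2)).
rewrite (eq_bigr (fun=> d ^ 2 * \sum_(r < N) cnorm N r ^ 2)) => [|t _].
  by rewrite sum_nat_const card_ord mulnA -expnS.
rewrite -(big_mulmod (fun r => cnorm N r ^ 2) cop) big_distrr /=.
apply: eq_bigr => r _.
by rewrite -mulnA -muln_modr mulnDr mulnA modnMDl cnorm_mul expnMn.
Qed.

Lemma sum_cnorm_mulmod_odd (a n : nat) : odd n ->
  12 * \sum_(j < n) cnorm n ((a * j) %% n) ^ 2 + gcdn a n ^ 2 * n = n ^ 3.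
Proof.
move=> oddn; have n_gt0 : 0 < n by case: n oddn.
have [N [b []]] := gcdn_cofactors a n_gt0.
set d := gcdn a n; clearbody d => nE aE cop.
have oddN : odd N by move: oddn; rewrite nE oddM => /andP[].
by rewrite nE aE sum_cnorm_mulmod // expnMn -(sum_cnorm_sq oddN); ring.
Qed.

Definition dev (m n : nat) : nat := \sum_(j < n) `|j - (m * j) %% n| ^ 2.

(* Nonnegative by [cnorm_le_dist], so the truncated subtraction is harmless. *)
Definition excess (m n j : nat) : nat :=
  `|j - (m * j) %% n| ^ 2 - cnorm n ((m.-1 * j) %% n) ^ 2.

Lemma dist_mulmod (m n j : nat) : 0 < m -> j < n ->
  `|j - (m * j) %% n| =
    if j + (m.-1 * j) %% n < n then (m.-1 * j) %% n else n - (m.-1 * j) %% n.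
Proof.
move=> m_gt0 ltjn; have n_gt0 : 0 < n by lia.
rewrite -[m]prednK // mulSn -modnDmr /=.
have := ltn_pmod (m.-1 * j) n_gt0; set x := (m.-1 * j) %% n => ltxn.
case: ifP => lt_jx_n; first by rewrite modn_small //; lia.
rewrite -(subnK (_ : n <= j + x)) ?modnDr ?modn_small; lia.
Qed.

Lemma cnorm_le_dist (m n j : nat) : 0 < m -> j < n ->
  cnorm n ((m.-1 * j) %% n) <= `|j - (m * j) %% n|.
Proof. by move=> m_gt0 ltjn; rewrite dist_mulmod // /cnorm; case: ifP; lia. Qed.

Lemma dev_mul2 (n : nat) : dev 2 n = \sum_(j < n) cnorm n j ^ 2.
Proof.
apply: eq_bigr => j _; have ltjn := ltn_ord j.
by rewrite dist_mulmod // mul1n modn_small // /cnorm; case: ifP; lia.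
Qed.

Lemma dev_split (m n : nat) : 0 < m ->
  dev m n = \sum_(j < n) cnorm n ((m.-1 * j) %% n) ^ 2 + \sum_(j < n) excess m n j.
Proof.
move=> m_gt0; rewrite -big_split /=; apply: eq_bigr => j _.
by rewrite /excess subnKC // leq_exp2r // cnorm_le_dist.
Qed.

Lemma excess_eq (m n j : nat) : 0 < m -> j < n ->
  j + (m.-1 * j) %% n < n -> n <= 2 * ((m.-1 * j) %% n) ->
  excess m n j = (2 * ((m.-1 * j) %% n) - n) * n.
Proof.
move=> m_gt0 ltjn lt_n le_n; rewrite /excess dist_mulmod // lt_n /cnorm.
have n_gt0 : 0 < n by lia.
have := ltn_pmod (m.-1 * j) n_gt0; set x := (m.-1 * j) %% n => ltxn.
rewrite (_ : minn x (n - x) = n - x) 1?subn_sqr; last lia.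
by congr (_ * _); lia.
Qed.

Lemma exists_dist_gt_half (m n : nat) : odd n -> 3 <= m < n -> coprime m n ->
  m <> (n + 1)./2 -> exists2 j, j < n & n < 2 * `|j - (m * j) %% n|.
Proof.
move=> /odd_double_halfS nE /andP[m_ge3 ltmn] cop m_neq.
have [lt_half_m | le_m_half] := ltnP (n + 1)./2 m.
  by exists 1; rewrite ?muln1 ?modn_small; lia.
have m_gt0 : 0 < m by lia.
have := ltn_pmod n m_gt0; have := divn_eq n m.
set q := n %/ m; set r := n %% m => n_divmod ltrm.
have r_gt0 : 0 < r.
  rewrite lt0n; apply: contraTneq cop => r0.
  by rewrite /coprime (gcdn_idPl _) ?/dvdn ?r0 //; lia.
exists q; first nia.
rewrite modn_small; nia.
Qed.

Lemma sum_blocks_ge (d N k c : nat) (F : nat -> nat) : k <= d ->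
  (forall t, t < k -> c <= \sum_(r < N) F (t * N + r)) -> k * c <= \sum_(j < d * N) F j.
Proof.
move=> le_kd block_ge; rewrite (big_ord_mul d N F).
have -> : k * c = \sum_(t < k) c by rewrite sum_nat_const card_ord.
apply: (@leq_trans (\sum_(t < k) \sum_(r < N) F (t * N + r))).
  by apply: leq_sum => t _; exact: block_ge (ltn_ord t).
exact: (@le_big_ord _ addn leq leqnn (fun x y => leq_addr y x) 0 _ _ xpredT
  (fun t => \sum_(r < N) F (t * N + r)) le_kd).
Qed.

Lemma sum_excess_ge (m n : nat) : odd n -> 0 < m -> ~~ (n %| m.-1) ->
  gcdn m.-1 n %/ 3 * (gcdn m.-1 n * n) <= \sum_(j < n) excess m n j.
Proof.
move=> oddn m_gt0 ndvd; have n_gt0 : 0 < n by case: n oddn ndvd.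
have d_gt0 : 0 < gcdn m.-1 n by rewrite gcdn_gt0 n_gt0 orbT.
have [N [b []]] := gcdn_cofactors m.-1 n_gt0.
move: d_gt0; set d := gcdn m.-1 n; clearbody d => d_gt0 nE aE cop.
have oddN : odd N by move: oddn; rewrite nE oddM => /andP[].
move: (odd_double_halfS oddN); set H := N./2 => NE.
have H_gt0 : 0 < H.
  rewrite lt0n; apply: contraNneq ndvd => H0.
  by rewrite aE nE NE H0 muln0 muln1 dvdn_mulr.
have [r0 ltr0N r0E] : exists2 r0, r0 < N & (b * r0) %% N = H.+1.
  by apply: mulmod_onto cop _; lia.
rewrite [in X in _ <= X]nE; apply: sum_blocks_ge (leq_div d 3) _ => t lttk.
rewrite -nE (bigD1 (Ordinal ltr0N)) //=; apply: leq_trans (leq_addr _ _).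
have xE : (m.-1 * (t * N + r0)) %% n = d * H.+1.
  by rewrite aE nE -mulnA -muln_modr mulnDr mulnA modnMDl r0E.
have k3 : d %/ 3 * 3 <= d := leq_divM d 3.
move: lttk k3; set k := d %/ 3 => lttk k3.
have lttN : t.+1 * N <= d * H.
  apply: leq_trans (_ : k * (3 * H) <= _); last by rewrite mulnA leq_mul2r k3 orbT.
  by apply: leq_mul; lia.
have ltjn : t * N + r0 < n by lia.
have ltjxn : t * N + r0 + d * H.+1 < n by lia.
have lenx : n <= 2 * (d * H.+1) by lia.
rewrite -xE in ltjxn lenx.
have -> : d * n = (2 * (d * H.+1) - n) * n by congr (_ * _); clear -nE NE; lia.
by rewrite excess_eq // xE.
Qed.

Lemma dev_mul2_lt (m n : nat) : odd n -> 3 <= m < n -> coprime m n ->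
  m <> (n + 1)./2 -> dev 2 n < dev m n.
Proof.
move=> oddn m_range cop m_neq; have /andP[m_ge3 ltmn] := m_range.
have m_gt0 : 0 < m by lia.
have dev2E : 12 * dev 2 n + n = n ^ 3 by rewrite dev_mul2 sum_cnorm_sq.
have cnormE := sum_cnorm_mulmod_odd m.-1 oddn.
rewrite (dev_split n m_gt0); set E := \sum_(j < n) excess m n j.
set d := gcdn m.-1 n in cnormE.
have d_gt0 : 0 < d by rewrite gcdn_gt0; lia.
have [d_le1 | d_gt1] := leqP d 1.
  have d1 : d = 1 by lia.
  have [j ltjn far_j] := exists_dist_gt_half oddn m_range cop m_neq.
  have excess_gt0 : 0 < excess m n j.
    rewrite subn_gt0 ltn_exp2r // /cnorm; lia.
  have : excess m n j <= E by rewrite /E (bigD1 (Ordinal ltjn)) //= leq_addr.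
  rewrite d1 in cnormE; lia.
have ndvd : ~~ (n %| m.-1) by apply/negP => /dvdn_leq; lia.
have := sum_excess_ge oddn m_gt0 ndvd; rewrite -/d -/E.
have odd_d : odd d := dvdn_odd (dvdn_gcdr _ _) oddn.
have d_neq2 : d != 2 by apply: contraTneq odd_d => ->.
have : d <= 12 * (d %/ 3) by lia.
move: (d %/ 3) => k le_d_12k E_ge.
have := leq_mul le_d_12k (leqnn (d * n)); lia.
Qed.

End Deviation.

Lemma natr_distn_sqr (R : comPzRingType) (a b : nat) :
  (`|a - b| ^ 2)%N%:R = (a%:R - b%:R) ^+ 2 :> R.
Proof.
have := congr1 (GRing.natmul (1 : R)) (sqrn_dist a b).
rewrite natrD !natrX !natrM => e; apply: (addIr (2%:R * (a%:R * b%:R))); rewrite e; ring.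
Qed.

Lemma sum_mulmod_prod (m n : nat) : coprime m n ->
  \sum_(j < n) ((2 * j)%:R - n%:R) * ((2 * ((m * j) %% n))%N%:R - n%:R)
    = \sum_(j < n) ((2 * j)%:R - n%:R) ^+ 2 - 2%:R * (dev m n)%:R :> rat.
Proof.
move=> cop; set f := fun k : nat => (2 * k)%:R - n%:R : rat.
have sq_perm : \sum_(j < n) f ((m * j) %% n)%N ^+ 2 = \sum_(j < n) f j ^+ 2.
  exact: (big_mulmod (fun k => f k ^+ 2) cop).
rewrite /dev natr_sum mulr_sumr.
transitivity (\sum_(j < n) ((f j ^+ 2 + f ((m * j) %% n)%N ^+ 2) / 2%:R
                            - 2%:R * (j%:R - ((m * j) %% n)%N%:R) ^+ 2)).
  by apply: eq_bigr => j _; rewrite /f !natrM; field.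
rewrite sumrB -mulr_suml big_split /= sq_perm.
congr (_ - _); last by apply: eq_bigr => j _; rewrite natr_distn_sqr.
by field.
Qed.

Lemma sawtooth_ratio (p n : nat) : (0 < n)%N -> ~~ (n %| p)%N ->
  sawtooth ((p%:Z)%:~R / (n%:Z)%:~R) = ((2 * (p %% n))%:R - n%:R) / (2 * n)%:R.
Proof.
move=> n_gt0 ndvd; have nR : n%:R != 0 :> rat by rewrite pnatr_eq0 -lt0n.
set x := _ / _; set q := (p %/ n)%N; set r := (p %% n)%N.
have xE : x = q%:R + r%:R / n%:R.
  by rewrite /x -!pmulrn {1}(divn_eq p n) natrD natrM; field.
have frac_ge0 : 0 <= r%:R / n%:R :> rat by rewrite divr_ge0.
have frac_lt1 : r%:R / n%:R < 1 :> rat by rewrite ltr_pdivrMr ?ltr0n // mul1r ltr_nat ltn_pmod.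
have floorx : Num.floor x = q%:Z.
  by apply: floor_def; rewrite xE intrD mulr1z -pmulrn lerDl frac_ge0 ltrD2l frac_lt1.
have frac_neq0 : r%:R / n%:R != 0 :> rat by rewrite mulf_neq0 ?invr_eq0 // pnatr_eq0.
have x_nint : x \isn't a Num.int.
  by rewrite intrEfloor floorx -pmulrn xE eq_sym addrC -subr_eq0 addrK.
by rewrite /sawtooth (negPf x_nint) floorx -pmulrn xE natrM; field.
Qed.

Lemma S_sum (m n : nat) : (0 < n)%N -> coprime m n ->
  S m n = 3%:R / n%:R ^+ 2 *
    (\sum_(j < n) ((2 * j)%:R - n%:R) * ((2 * ((m * j) %% n))%N%:R - n%:R) - n%:R ^+ 2).
Proof.
move=> n_gt0 cop; have nR : n%:R != 0 :> rat by rewrite pnatr_eq0 -lt0n.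
have ndvd j : (0 < j < n)%N -> ~~ (n %| m * j)%N.
  move=> /andP[j_gt0 ltjn]; rewrite Gauss_dvdr 1?coprime_sym //.
  by apply/negP => /(dvdn_leq j_gt0); lia.
have sawtooth1 : sawtooth ((n%:Z)%:~R / (n%:Z)%:~R) = 0.
  by rewrite /sawtooth divff ?intr_eq0 // lt0n_neq0.
rewrite /S /dedekind_sum absz_nat big_nat_recr //= sawtooth1 mul0r addr0.
rewrite -(big_mkord xpredT (fun j => ((2 * j)%:R - n%:R) * ((2 * ((m * j) %% n))%N%:R - n%:R))).
rewrite [in RHS]big_ltn //= !muln0 mod0n sub0r mulrNN -expr2 addrAC subrr add0r.
rewrite !big_distrr /=; apply: eq_big_nat => j /andP[j_gt0 ltjn].
rewrite -PoszM !sawtooth_ratio ?ndvd ?j_gt0 //; last by apply/negP => /(dvdn_leq j_gt0); lia.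
by rewrite modn_small // !natrM; field.
Qed.

Lemma S_dev (m n : nat) : (0 < n)%N -> coprime m n ->
  S m n = 3%:R / n%:R ^+ 2 *
    (\sum_(j < n) ((2 * j)%:R - n%:R) ^+ 2 - n%:R ^+ 2 - 2%:R * (dev m n)%:R).
Proof. by move=> n_gt0 cop; rewrite S_sum // sum_mulmod_prod // addrAC. Qed.

Theorem theorem2 (n : nat) :
  (3 <= n)%N -> odd n ->
  forall m : nat, (3 <= m)%N -> (m <= n - 1)%N -> coprime m n ->
  m <> (n + 1)./2 ->
  S (m%:Z) (n%:Z) < S 2%:Z (n%:Z).
Proof.
move=> n_ge3 oddn m m_ge3 le_m_n1 cop m_neq.
have n_gt0 : (0 < n)%N by lia.
have m_range : (3 <= m < n)%N by rewrite m_ge3; lia.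
have lt_dev := dev_mul2_lt oddn m_range cop m_neq.
rewrite !S_dev ?coprime2n // ltr_pM2l ?divr_gt0 ?exprn_gt0 ?ltr0n //.
by rewrite ltrD2l ltrN2 ltr_pM2l ?ltr0n // ltr_nat.
Qed.
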